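(* Let $f$ be a real function infinitely differentiable on a neighborhood of $0$, and write $c_k^f=f^{(k)}(0)$. For $n,k\in\mathbb{N}_0$ define \[ b_{n,k}=\frac{1}{k!}\sum_{i=0}^{k}(-1)^i\binom{k}{i}(k-i)^{\llbracket n\rrbracket},\qquad a_n=\frac{1}{n!}\sum_{k=0}^{n}c_k^f\,b_{n,k}. \] Then the function $\mathcal{A}^{f,D_3}(x)=\sum_{n=0}^{\infty}a_n[\ln(x+1)]^n$ matches all derivatives of $f$ at $0$; precisely, for every $N\in\mathbb{N}_0$, the function $x\mapsto\sum_{n=0}^{N}a_n[\ln(x+1)]^n$ satisfies \[ \frac{d^m}{dx^m}\Big[\sum_{n=0}^{N}a_n[\ln(x+1)]^n\Big]_{x=0}=f^{(m)}(0)\qquad\text{for all }0\le m\le N . \]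
   Context: The generalized exponentiation is defined by $x^{\llbracket y\rrbracket}=1$ if $x=y=0$, and $x^{\llbracket y\rrbracket}=x^y$ otherwise; with this convention $b_{n,k}$ are the Stirling numbers of the second kind, including $b_{0,0}=1$ and $b_{n,0}=0$ for $n>0$. *)

From Stdlib Require Import Reals.
From Coquelicot Require Import Coquelicot.
Open Scope R_scope.

Definition gpow (x : R) (y : nat) : R :=
  if Req_EM_T x 0 then (if Nat.eqb y 0 then 1 else x ^ y) else x ^ y.

Definition bnk (n k : nat) : R :=
  / INR (Factorial.fact k) *
  sum_f_R0 (fun i => (-1) ^ i * Binomial.C k i * gpow (INR (k - i)) n) k.

Definition cf (f : R -> R) (k : nat) : R := Derive_n f k 0.

Definition an (f : R -> R) (n : nat) : R :=
  / INR (Factorial.fact n) * sum_f_R0 (fun k => cf f k * bnk n k) n.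

Definition partialA (f : R -> R) (N : nat) (x : R) : R :=
  sum_f_R0 (fun n => an f n * (ln (x + 1)) ^ n) N.

From Stdlib Require Import Reals Lra Lia.
From Coquelicot Require Import Coquelicot.
Open Scope R_scope.

(* Substitute x = exp t - 1. Then theta = (1 + x) d/dx is d/dt, and the partial sum is a
   polynomial in t = ln (x + 1), so theta^j of it takes the value j! a_j at 0 for j <= N.
   On the other side theta^j f = sum_k b_{j,k} (1 + x)^k f^(k), since the b_{j,k} obey the
   Stirling recurrence b_{j+1,k+1} = (k+1) b_{j,k+1} + b_{j,k}; at 0 this is
   sum_k b_{j,k} c_k = j! a_j too. Finally (theta g)^(m)(0) = g^(m+1)(0) + m g^(m)(0) is a
   triangular system: the values (theta^j g)(0), j <= N, determine g^(m)(0), m <= N. *)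

Lemma gpow_0 x : gpow x 0 = 1.
Proof. unfold gpow. now destruct (Req_EM_T x 0). Qed.

Lemma gpow_S x n : gpow x (S n) = x * gpow x n.
Proof. unfold gpow. destruct (Req_EM_T x 0) as [->|]; simpl; ring. Qed.

Definition stirling_sum (n k : nat) : R :=
  sum_f_R0 (fun i => (-1) ^ i * Binomial.C k i * gpow (INR (k - i)) n) k.

Lemma bnkE n k : bnk n k = / INR (Factorial.fact k) * stirling_sum n k.
Proof. reflexivity. Qed.

Lemma C_absorb k i : (i <= k)%nat ->
  INR (S i) * Binomial.C (S k) (S i) = INR (S k) * Binomial.C k i.
Proof.
  intros Hik. unfold Binomial.C.
  replace (S k - S i)%nat with (k - i)%nat by lia.
  rewrite !fact_simpl, !mult_INR. field.
  repeat split; try apply INR_fact_neq_0; apply not_0_INR; lia.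
Qed.

(* Split (k+1-i)^[[n+1]] = (k+1) (k+1-i)^[[n]] - i (k+1-i)^[[n]]; absorbing the factor i
   into the binomial coefficient turns the second sum into stirling_sum n k. *)
Lemma stirling_sum_S_S n k :
  stirling_sum (S n) (S k) = INR (S k) * (stirling_sum n (S k) + stirling_sum n k).
Proof.
  unfold stirling_sum.
  rewrite (sum_eq _ (fun i =>
             (-1) ^ i * Binomial.C (S k) i * gpow (INR (S k - i)) n * INR (S k)
             - (-1) ^ i * (INR i * Binomial.C (S k) i) * gpow (INR (S k - i)) n)).
  2:{ intros i Hi. rewrite gpow_S, minus_INR by exact Hi. ring. }
  rewrite minus_sum, <- scal_sum.
  rewrite (decomp_sum (fun i => _ * (INR i * _) * _)) by lia; simpl pred.
  rewrite (sum_eq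
             (fun i => (-1) ^ S i * (INR (S i) * Binomial.C (S k) (S i))
                       * gpow (INR (S k - S i)) n)
             (fun i => (-1) ^ i * Binomial.C k i * gpow (INR (k - i)) n * - INR (S k))).
  2:{ intros i Hi. rewrite C_absorb by exact Hi. rewrite Nat.sub_succ. simpl pow. ring. }
  rewrite <- scal_sum. simpl INR at 3. ring.
Qed.

Lemma bnk_S_S n k : bnk (S n) (S k) = INR (S k) * bnk n (S k) + bnk n k.
Proof.
  rewrite !bnkE, stirling_sum_S_S.
  rewrite fact_simpl, mult_INR. field. split; [apply INR_fact_neq_0 | apply not_0_INR; lia].
Qed.

Lemma bnk_S_0 n : bnk (S n) 0 = 0.
Proof. rewrite bnkE. unfold stirling_sum. simpl. rewrite gpow_S. ring. Qed.

Lemma bnk_0_0 : bnk 0 0 = 1.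
Proof. rewrite bnkE. unfold stirling_sum, Binomial.C. simpl. rewrite gpow_0. field. Qed.

Lemma bnk_0_S k : bnk 0 (S k) = 0.
Proof.
  rewrite bnkE. unfold stirling_sum.
  rewrite (sum_eq _ (fun i => Binomial.C (S k) i * (-1) ^ i * 1 ^ (S k - i))).
  - rewrite <- binomial. replace (-1 + 1) with 0 by ring. simpl. ring.
  - intros i _. rewrite gpow_0, pow1. ring.
Qed.

Lemma bnk_gt n k : (n < k)%nat -> bnk n k = 0.
Proof.
  revert k; induction n as [|n IH]; intros [|k] Hk; try lia.
  - apply bnk_0_S.
  - rewrite bnk_S_S, !IH by lia. ring.
Qed.

Definition smooth_on (U : R -> Prop) (h : R -> R) : Prop :=
  forall k x, U x -> ex_derive_n h k x.

Lemma Derive_n_Derive f k x : Derive_n (Derive f) k x = Derive_n f (S k) x.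
Proof. rewrite <- Nat.add_1_r, <- Derive_n_comp. reflexivity. Qed.

Lemma ex_derive_n_S f k x :
  ex_derive f x -> ex_derive_n (Derive f) k x -> ex_derive_n f (S k) x.
Proof.
  intros Hf Hdf. destruct k as [|k]; [exact Hf|].
  apply (ex_derive_ext (Derive_n (Derive f) k)); [|exact Hdf].
  intro t. apply Derive_n_Derive.
Qed.

Lemma smooth_on_sub (U V : R -> Prop) h :
  (forall x, V x -> U x) -> smooth_on U h -> smooth_on V h.
Proof. intros VU Hh k x Vx. now apply Hh, VU. Qed.

Definition theta (g : R -> R) (x : R) : R := (1 + x) * Derive g x.

Lemma is_derive_Derive_n_theta_rhs g m x :
  ex_derive_n g (S m) x -> ex_derive_n g (S (S m)) x ->
  is_derive (fun y => (1 + y) * Derive_n g (S m) y + INR m * Derive_n g m y) x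
    ((1 + x) * Derive_n g (S (S m)) x + INR (S m) * Derive_n g (S m) x).
Proof.
  intros H1 H2. apply Derive_correct in H1, H2.
  evar (l : R). replace (_ + INR (S m) * _) with l.
  - apply (@is_derive_plus R_AbsRing); [|apply is_derive_scal, H1].
    apply (@is_derive_mult R_AbsRing); [|exact H2|intros; apply Rmult_comm].
    apply (@is_derive_plus R_AbsRing); [apply is_derive_const | apply is_derive_id].
  - unfold l. rewrite S_INR. unfold plus, mult, one, zero; simpl. ring.
Qed.

Definition stirling_expansion (f : R -> R) (j : nat) (x : R) : R :=
  sum_f_R0 (fun k => bnk j k * (1 + x) ^ k * Derive_n f k x) j.

Lemma is_derive_sum_f_R0 (g : nat -> R -> R) (dg : nat -> R) j x :
  (forall k, (k <= j)%nat -> is_derive (g k) x (dg k)) ->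
  is_derive (fun y : R => sum_f_R0 (fun k => g k y) j) x (sum_f_R0 dg j).
Proof.
  induction j as [|j IH]; intros Hg; simpl; [now apply Hg|].
  apply (@is_derive_plus R_AbsRing); [apply IH; intros k Hk |]; apply Hg; lia.
Qed.

Lemma sum_f_R0_shift (a : nat -> R) j : a 0%nat = 0 -> a (S j) = 0 ->
  sum_f_R0 a j = sum_f_R0 (fun k => a (S k)) j.
Proof.
  intros a0 aSj. assert (E := decomp_sum a (S j) ltac:(lia)).
  rewrite tech5 in E. simpl pred in E. lra.
Qed.

Lemma is_derive_stirling_term f b k x : ex_derive_n f (S k) x ->
  is_derive (fun y => b * (1 + y) ^ k * Derive_n f k y) x
    (b * (INR k * (1 + x) ^ pred k) * Derive_n f k x + b * (1 + x) ^ k * Derive_n f (S k) x).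
Proof.
  intros Hf. apply Derive_correct in Hf.
  assert (Hpow : is_derive (fun y => b * (1 + y) ^ k) x (b * (INR k * (1 + x) ^ pred k))).
  { apply is_derive_scal. auto_derive; [exact I | ring]. }
  exact (@is_derive_mult R_AbsRing _ _ x _ _ Hpow Hf (fun _ _ => Rmult_comm _ _)).
Qed.

Lemma theta_stirling_expansion f j (x : R) : (forall k, ex_derive_n f k x) ->
  theta (stirling_expansion f j) x = stirling_expansion f (S j) x.
Proof.
  intros Hf. unfold theta, stirling_expansion at 1.
  rewrite (is_derive_unique _ _ _ (is_derive_sum_f_R0 _ _ j x
             (fun k _ => is_derive_stirling_term f (bnk j k) k x (Hf (S k))))).
  rewrite scal_sum, (sum_eq _ (fun k => INR k * bnk j k * (1 + x) ^ k * Derive_n f k x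
                                 + bnk j k * (1 + x) ^ S k * Derive_n f (S k) x)).
  2:{ intros [|k] _; simpl pred; simpl pow; simpl INR; ring. }
  rewrite plus_sum, (sum_f_R0_shift (fun k => INR k * _ * _ * _)).
  2: simpl; ring.
  2: rewrite bnk_gt by lia; ring.
  unfold stirling_expansion. rewrite (decomp_sum _ (S j)) by lia. simpl pred.
  rewrite bnk_S_0, <- plus_sum, !Rmult_0_l, Rplus_0_l.
  apply sum_eq. intros k _. rewrite bnk_S_S. ring.
Qed.

Section SmoothOpen.

Variable U : R -> Prop.
Hypothesis U_open : open U.

Lemma locally_of_open x (P : R -> Prop) : U x -> (forall y, U y -> P y) -> locally x P.
Proof. intros Ux HP. exact (locally_open U P U_open HP x Ux). Qed.

Lemma smooth_on_of_derive_closed (P : (R -> R) -> Prop) :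
  (forall h, P h -> exists g, P g /\ forall x, U x -> is_derive h x (g x)) ->
  forall h, P h -> smooth_on U h.
Proof.
  intros HP h Ph k. revert h Ph.
  induction k as [|k IH]; intros h Ph x Ux; [exact I|].
  destruct (HP h Ph) as [g [Pg Hg]].
  apply ex_derive_n_S; [eexists; now apply Hg|].
  apply (ex_derive_n_ext_loc g); [|now apply IH].
  apply (locally_of_open x); [exact Ux|].
  intros y Uy. symmetry. now apply is_derive_unique, Hg.
Qed.

Lemma Derive_n_theta g : smooth_on U g -> forall m x, U x ->
  Derive_n (theta g) m x = (1 + x) * Derive_n g (S m) x + INR m * Derive_n g m x.
Proof.
  intros Hg m. induction m as [|m IH]; intros x Ux.
  - simpl. rewrite Rmult_0_l, Rplus_0_r. reflexivity.
  - simpl Derive_n at 1.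
    rewrite (Derive_ext_loc _
               (fun y => (1 + y) * Derive_n g (S m) y + INR m * Derive_n g m y)).
    + apply is_derive_unique, is_derive_Derive_n_theta_rhs; now apply Hg.
    + now apply (locally_of_open x).
Qed.

Lemma smooth_on_theta g : smooth_on U g -> smooth_on U (theta g).
Proof.
  intros Hg [|k] x Ux; [exact I|].
  apply (ex_derive_ext_loc (fun y => (1 + y) * Derive_n g (S k) y + INR k * Derive_n g k y)).
  - apply (locally_of_open x); [exact Ux|].
    intros y Uy. symmetry. now apply Derive_n_theta.
  - eexists. apply is_derive_Derive_n_theta_rhs; now apply Hg.
Qed.

Lemma smooth_on_iter_theta g j : smooth_on U g -> smooth_on U (Nat.iter j theta g).
Proof. intros Hg. induction j as [|j IH]; [exact Hg | now apply smooth_on_theta]. Qed.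

Lemma Derive_n_eq_of_iter_theta_eq P F N : U 0 -> smooth_on U P -> smooth_on U F ->
  (forall j, (j <= N)%nat -> Nat.iter j theta P 0 = Nat.iter j theta F 0) ->
  forall m, (m <= N)%nat -> Derive_n P m 0 = Derive_n F m 0.
Proof.
  intros U0 HP HF Hiter.
  enough (H : forall m j, (j + m <= N)%nat ->
            Derive_n (Nat.iter j theta P) m 0 = Derive_n (Nat.iter j theta F) m 0).
  { intros m Hm. exact (H m 0%nat Hm). }
  induction m as [|m IH]; intros j Hj.
  - apply Hiter. lia.
  - assert (EP := Derive_n_theta _ (smooth_on_iter_theta P j HP) m 0 U0).
    assert (EF := Derive_n_theta _ (smooth_on_iter_theta F j HF) m 0 U0).
    assert (IHS := IH (S j) ltac:(lia)). assert (IHj := IH j ltac:(lia)).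
    simpl Nat.iter in IHS. rewrite IHS, IHj in EP. lra.
Qed.

Lemma iter_theta_ext g h j x : (forall y, U y -> g y = h y) -> U x ->
  Nat.iter j theta g x = Nat.iter j theta h x.
Proof.
  intros Egh. revert x. induction j as [|j IH]; intros x Ux; [now apply Egh|].
  simpl. unfold theta. f_equal.
  apply Derive_ext_loc, (locally_of_open x); auto.
Qed.

Lemma iter_theta_stirling_expansion f j x : U x -> smooth_on U f ->
  Nat.iter j theta f x = stirling_expansion f j x.
Proof.
  intros Ux Hf. revert x Ux. induction j as [|j IH]; intros x Ux.
  - unfold stirling_expansion. simpl. rewrite bnk_0_0. ring.
  - rewrite <- theta_stirling_expansion by (intro k; now apply Hf).
    simpl Nat.iter. unfold theta. f_equal.
    apply Derive_ext_loc, (locally_of_open x); auto.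
Qed.

End SmoothOpen.

Definition ln_poly (c : nat -> R) (M : nat) (x : R) : R :=
  sum_f_R0 (fun n => c n * ln (x + 1) ^ n) M.

Inductive poly_ln_inv : (R -> R) -> Prop :=
  | poly_ln_inv_const c : poly_ln_inv (fun _ => c)
  | poly_ln_inv_ln : poly_ln_inv (fun x => ln (x + 1))
  | poly_ln_inv_inv : poly_ln_inv (fun x => / (x + 1))
  | poly_ln_inv_plus h g : poly_ln_inv h -> poly_ln_inv g -> poly_ln_inv (fun x => h x + g x)
  | poly_ln_inv_mult h g : poly_ln_inv h -> poly_ln_inv g -> poly_ln_inv (fun x => h x * g x).

Lemma poly_ln_inv_derive h : poly_ln_inv h ->
  exists g, poly_ln_inv g /\ forall x, -1 < x -> is_derive h x (g x).
Proof.
  induction 1 as [c | | | h g _ [dh [Pdh Hdh]] _ [dg [Pdg Hdg]]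
                 | h g Ph [dh [Pdh Hdh]] Pg [dg [Pdg Hdg]]].
  - exists (fun _ => 0). split; [apply poly_ln_inv_const | intros x _].
    apply (@is_derive_const R_AbsRing).
  - exists (fun x => / (x + 1)). split; [apply poly_ln_inv_inv | intros x Hx].
    auto_derive; [lra | field; lra].
  - exists (fun x => -1 * (/ (x + 1) * / (x + 1))). split; [| intros x Hx].
    { apply poly_ln_inv_mult; [apply poly_ln_inv_const |].
      apply poly_ln_inv_mult; apply poly_ln_inv_inv. }
    auto_derive; [lra | field; lra].
  - exists (fun x => dh x + dg x). split; [now apply poly_ln_inv_plus | intros x Hx].
    exact (@is_derive_plus R_AbsRing _ _ _ x _ _ (Hdh x Hx) (Hdg x Hx)).
  - exists (fun x => dh x * g x + h x * dg x). split; [| intros x Hx].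
    { apply poly_ln_inv_plus; now apply poly_ln_inv_mult. }
    exact (@is_derive_mult R_AbsRing _ _ x _ _ (Hdh x Hx) (Hdg x Hx)
             (fun _ _ => Rmult_comm _ _)).
Qed.

Lemma poly_ln_inv_ln_poly c M : poly_ln_inv (ln_poly c M).
Proof.
  assert (Hpow : forall n, poly_ln_inv (fun x => ln (x + 1) ^ n)).
  { induction n as [|n IH]; [exact (poly_ln_inv_const 1) |].
    exact (poly_ln_inv_mult _ _ poly_ln_inv_ln IH). }
  induction M as [|M IH]; [| apply poly_ln_inv_plus; [exact IH |]];
    apply poly_ln_inv_mult; auto using poly_ln_inv_const.
Qed.

Lemma smooth_ln_poly c M : smooth_on (fun x => -1 < x) (ln_poly c M).
Proof.
  apply (smooth_on_of_derive_closed _ (open_gt (-1)) poly_ln_inv).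
  - exact poly_ln_inv_derive.
  - apply poly_ln_inv_ln_poly.
Qed.

Definition coef_deriv (c : nat -> R) (n : nat) : R := INR (S n) * c (S n).

Lemma is_derive_ln_poly c M x : -1 < x ->
  is_derive (ln_poly c (S M)) x (ln_poly (coef_deriv c) M x / (x + 1)).
Proof.
  intros Hx. unfold ln_poly.
  replace (sum_f_R0 _ M / (x + 1))
    with (sum_f_R0 (fun n => c n * (INR n * ln (x + 1) ^ pred n * / (x + 1))) (S M)).
  - apply is_derive_sum_f_R0. intros n _. auto_derive; [lra | ring].
  - rewrite decomp_sum by lia. cbn [pred]. change (INR 0) with 0.
    unfold Rdiv. rewrite (Rmult_comm (sum_f_R0 _ M)), scal_sum.
    rewrite Rmult_0_l, Rmult_0_l, Rmult_0_r, Rplus_0_l.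
    apply sum_eq. intros n _. unfold coef_deriv. ring.
Qed.

Lemma theta_ln_poly c M x : -1 < x ->
  theta (ln_poly c (S M)) x = ln_poly (coef_deriv c) M x.
Proof.
  intros Hx. unfold theta. rewrite (is_derive_unique _ _ _ (is_derive_ln_poly c M x Hx)).
  field. lra.
Qed.

Lemma ln_poly_0 c M : ln_poly c M 0 = c 0%nat.
Proof.
  unfold ln_poly. rewrite Rplus_0_l, ln_1.
  induction M as [|M IH]; simpl; [|rewrite IH]; ring.
Qed.

Lemma iter_theta_ln_poly_0 c N j : (j <= N)%nat ->
  Nat.iter j theta (ln_poly c N) 0 = INR (Factorial.fact j) * c j.
Proof.
  revert c N. induction j as [|j IH]; intros c N Hj.
  - simpl. rewrite ln_poly_0. ring.
  - destruct N as [|N]; [lia|].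
    rewrite Nat.iter_succ_r.
    rewrite (iter_theta_ext _ (open_gt (-1)) _ (ln_poly (coef_deriv c) N));
      [| exact (theta_ln_poly c N) | lra].
    rewrite IH by lia. unfold coef_deriv. rewrite fact_simpl, mult_INR. ring.
Qed.

Theorem proposition4 (f : R -> R)
  (Hsmooth : exists eps : R, 0 < eps /\
     forall (k : nat) (x : R), Rabs x < eps -> ex_derive_n f k x) :
  forall N m : nat, (m <= N)%nat ->
    Derive_n (partialA f N) m 0 = Derive_n f m 0.
Proof.
  destruct Hsmooth as [eps [eps_pos Hf]]. intros N m Hm.
  assert (r_pos : 0 < Rmin eps 1) by (apply Rmin_glb_lt; lra).
  assert (r_eps := Rmin_l eps 1). assert (r_1 := Rmin_r eps 1).
  set (r := Rmin eps 1) in *.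
  set (U := fun x => - r < x < r).
  assert (U_open : open U) by (apply open_and; [apply open_gt | apply open_lt]).
  assert (U0 : U 0) by (split; lra).
  assert (U_ln : forall x, U x -> -1 < x) by (intros x [Hl Hr]; lra).
  assert (U_eps : forall x, U x -> Rabs x < eps)
    by (intros x [Hl Hr]; apply Rabs_def1; lra).
  assert (f_smooth : smooth_on U f) by (intros k x Ux; now apply Hf, U_eps).
  apply (Derive_n_eq_of_iter_theta_eq U U_open _ _ N U0); auto.
  - exact (smooth_on_sub _ _ _ U_ln (smooth_ln_poly (an f) N)).
  - intros j Hj. change (partialA f N) with (ln_poly (an f) N).
    rewrite iter_theta_ln_poly_0, (iter_theta_stirling_expansion U U_open) by assumption.
    unfold an, stirling_expansion, cf.
    rewrite <- Rmult_assoc, Rinv_r, Rmult_1_l by apply INR_fact_neq_0.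
    apply sum_eq. intros k _. rewrite Rplus_0_r, pow1. ring.
Qed.
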